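(* Suppose $p\in\mathbb{C}[z_1,z_2]$ is semi-stable, $\tilde p/p$ is non-tangentially $C^k$ at a point $\lambda\in\mathbb{T}^2$, and $p$ vanishes to order $M$ at $\lambda$. Then $N_\lambda(p,\tilde p)\ge M(M+k+1)$.
   Context: $\mathbb{D}$ is the open unit disk, $\mathbb{T}$ the unit circle. For $p$ of bidegree $(n,m)$, $\tilde p(z)=z_1^nz_2^m\overline{p(1/\bar z_1,1/\bar z_2)}$; $p$ is semi-stable if it has no zeros in $\mathbb{D}^2$ and $p,\tilde p$ have no common factor. For $\lambda\in\mathbb{T}^2$ and $c>1$ let $\Gamma_c(\lambda)$ be the set of $z\in\mathbb{D}^2$ for which any two of $|z_1-\lambda_1|,|z_2-\lambda_2|,1-|z_1|,1-|z_2|$ have ratio in $[1/c,c]$. A function $f$ on $\mathbb{D}^2$ is non-tangentially $C^k$ at $\lambda$ if there is a polynomial $L$ of degree at most $k$ with $f(z)-L(z-\lambda)=o(|z-\lambda|^k)$ as $z\to\lambda$ in $\Gamma_c(\lambda)$, for every $c>1$. Vanishing to order $M$ at $\lambda$ means the lowest nonzero homogeneous term of the Taylor expansion at $\lambda$ has degree $M$. $N_\lambda(f,g)=\dim_{\mathbb{C}}\mathcal{O}_\lambda/\langle f,g\rangle\mathcal{O}_\lambda$ is the intersection multiplicity ($\mathcal{O}_\lambda$ = rational functions with denominator nonvanishing at $\lambda$). *)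

(* complex numbers R[i] over R : realType (mathcomp-real-closed),
   bivariate polynomials as {poly {poly C}} (outer variable z2, inner variable z1),
   rational functions as {fraction {poly {poly C}}}. *)
From HB Require Import structures.
From mathcomp Require Import all_boot all_order all_algebra.
From mathcomp Require Import complex.
From mathcomp Require Import reals.
Set Implicit Arguments. Unset Strict Implicit. Unset Printing Implicit Defensive.
Import Order.TTheory GRing.Theory Num.Theory.
Local Open Scope ring_scope.

Section Defs.
Variable R : realType.
Local Notation C := (R[i]).
Local Notation P := {poly {poly C}}.

Definition ev2 (p : P) (z1 z2 : C) : C := (p.[z2%:P]).[z1].

Definition coef2 (p : P) (i j : nat) : C := p`_j`_i.

Definition deg1 (p : P) : nat := \max_(j < size p) (size (nth 0%R p j)).-1.
Definition deg2 (p : P) : nat := (size p).-1.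

(* z1^n z2^m conj(p(1/conj z1, 1/conj z2)), written coefficientwise *)
Definition reflect2 (n m : nat) (p : P) : P :=
  \poly_(j < m.+1) \poly_(i < n.+1) Num.conj (coef2 p (n - i) (m - j)).

Definition ptilde (p : P) : P := reflect2 (deg1 p) (deg2 p) p.

Definition semi_stable (p : P) : Prop :=
  (forall z1 z2 : C, `|z1| < 1 -> `|z2| < 1 -> ev2 p z1 z2 != 0) /\
  (forall q r s : P, p = q * r -> ptilde p = q * s -> q \is a GRing.unit).

(* p(w1 + l1, w2 + l2) *)
Definition shift2 (p : P) (l1 l2 : C) : P :=
  (map_poly (fun r : {poly C} => r \Po ('X + l1%:P)) p) \Po ('X + (l2%:P)%:P).

Definition vanishes_to_order (p : P) (l1 l2 : C) (M : nat) : Prop :=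
  (exists i j, (i + j = M)%N /\ coef2 (shift2 p l1 l2) i j != 0) /\
  (forall i j, (i + j < M)%N -> coef2 (shift2 p l1 l2) i j = 0).

Definition dist2 (z1 z2 l1 l2 : C) : C := sqrtC (`|z1 - l1| ^+ 2 + `|z2 - l2| ^+ 2).

Definition Gamma (c : R) (l1 l2 z1 z2 : C) : Prop :=
  `|z1| < 1 /\ `|z2| < 1 /\
  let q := [:: `|z1 - l1|; `|z2 - l2|; 1 - `|z1|; 1 - `|z2|] in
  forall x y, x \in q -> y \in q -> x <= (c%:C)%C * y /\ y <= (c%:C)%C * x.

Definition nt_Ck (f : C -> C -> C) (l1 l2 : C) (k : nat) : Prop :=
  exists L : P, (forall i j, (k < i + j)%N -> coef2 L i j = 0) /\
  forall c : R, 1 < c -> forall eps : R, 0 < eps -> exists2 delta : R, 0 < delta &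
    forall z1 z2 : C, Gamma c l1 l2 z1 z2 -> dist2 z1 z2 l1 l2 < (delta%:C)%C ->
      `|f z1 z2 - ev2 L (z1 - l1) (z2 - l2)| <= (eps%:C)%C * dist2 z1 z2 l1 l2 ^+ k.

Local Notation F := {fraction P}.
Local Notation tofrac := (@FracField.tofrac P).

Definition in_Olocal (l1 l2 : C) (x : F) : Prop :=
  exists a b : P, ev2 b l1 l2 != 0 /\ x = tofrac a / tofrac b.

Definition in_ideal_loc (f g : P) (l1 l2 : C) (x : F) : Prop :=
  exists u v : F, in_Olocal l1 l2 u /\ in_Olocal l1 l2 v /\
    x = u * tofrac f + v * tofrac g.

(* N_l(f,g) >= n, i.e. dim_C O_l / <f,g> O_l >= n (possibly infinite):
   there are n elements of O_l whose classes are C-linearly independent *)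
Definition intersection_multiplicity_ge (f g : P) (l1 l2 : C) (n : nat) : Prop :=
  exists r : 'I_n -> F, (forall i, in_Olocal l1 l2 (r i)) /\
    forall a : 'I_n -> C,
      in_ideal_loc f g l1 l2 (\sum_(i < n) tofrac (((a i)%:P)%:P) * r i) ->
      forall i, a i = 0.

End Defs.

(* Let L be a Taylor polynomial of ptilde/p at lambda and Q = ptilde - L p.
   The rays lambda + s (-lambda1, -t lambda2), t = 1, 2, ..., stay in a
   non-tangential region, and along them |Q| = |p| |ptilde/p - L| is
   O(s^M) o(s^k).  Hence for d <= M + k the degree-d homogeneous part of Q at
   lambda vanishes at d + 1 points of a line through the origin, so it is 0:
   Q vanishes to order M + k + 1 at lambda.  As <p, ptilde> = <p, Q> locally,
   it remains to see that f, g vanishing to orders m, n give N(f, g) >= m n.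
   Modulo monomials of degree >= m + n (where local units are invertible by a
   geometric series) the ideal is spanned by the x^i y^j f with i + j < n and
   the x^i y^j g with i + j < m: at most T(n) + T(m) jets in a space of
   dimension T(m + n) = T(m) + T(n) + m n, where T(d) = d (d + 1) / 2. *)
From HB Require Import structures.
From mathcomp Require Import all_boot all_order all_algebra.
From mathcomp Require Import complex reals.
From mathcomp Require Import zify ring lra.
Set Implicit Arguments. Unset Strict Implicit. Unset Printing Implicit Defensive.
Import Order.TTheory GRing.Theory Num.Theory.
Local Open Scope ring_scope.

Section BivariatePolynomials.
Variable R : realType.
Local Notation C := R[i].
Local Notation P := {poly {poly C}}.
Implicit Types (f g : P) (a b : C).

Lemma shift2D f g a b : shift2 (f + g) a b = shift2 f a b + shift2 g a b.
Proof. by rewrite /shift2 !rmorphD. Qed.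

Lemma shift2M f g a b : shift2 (f * g) a b = shift2 f a b * shift2 g a b.
Proof. by rewrite /shift2 !rmorphM. Qed.

Lemma shift2C (c : C) a b : shift2 c%:P%:P a b = c%:P%:P.
Proof. by rewrite /shift2 map_polyC /= !comp_polyC. Qed.

Lemma shift2_sum I (r : seq I) (F : I -> P) a b :
  shift2 (\sum_(x <- r) F x) a b = \sum_(x <- r) shift2 (F x) a b.
Proof. by rewrite /shift2 !rmorph_sum. Qed.

Lemma ev2B f g z1 z2 : ev2 (f - g) z1 z2 = ev2 f z1 z2 - ev2 g z1 z2.
Proof. by rewrite /ev2 !hornerD !hornerN. Qed.

Lemma ev2M f g z1 z2 : ev2 (f * g) z1 z2 = ev2 f z1 z2 * ev2 g z1 z2.
Proof. by rewrite /ev2 !hornerM. Qed.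

Lemma ev2CM (c : C) f z1 z2 : ev2 (c%:P%:P * f) z1 z2 = c * ev2 f z1 z2.
Proof. by rewrite /ev2 !hornerCM. Qed.

Lemma ev21 z1 z2 : ev2 (1 : P) z1 z2 = 1.
Proof. by rewrite /ev2 !hornerE. Qed.

Lemma ev2_sum I (r : seq I) (F : I -> P) z1 z2 :
  ev2 (\sum_(x <- r) F x) z1 z2 = \sum_(x <- r) ev2 (F x) z1 z2.
Proof. by rewrite /ev2 !horner_sum. Qed.

Lemma ev2E f z1 z2 : ev2 f z1 z2 =
  \sum_(j < size f) \sum_(i < size f`_j) coef2 f i j * z1 ^+ i * z2 ^+ j.
Proof.
rewrite /ev2 (horner_coef f) horner_sum; apply: eq_bigr => j _.
by rewrite hornerM horner_exp hornerC horner_coef mulr_suml.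
Qed.

Lemma ev200 f : ev2 f 0 0 = coef2 f 0 0.
Proof. by rewrite /ev2 /coef2 polyC0 !horner_coef0. Qed.

Lemma ev2_shift2 f a b z1 z2 : ev2 (shift2 f a b) z1 z2 = ev2 f (z1 + a) (z2 + b).
Proof.
rewrite /ev2 /shift2 horner_comp !hornerE -polyCD.
rewrite -[(z2 + b)%:P](comp_polyC _ ('X + a%:P)) horner_map /=.
by rewrite comp_polyC horner_comp !hornerE.
Qed.

Lemma shift2_shift2 f a1 a2 b1 b2 :
  shift2 (shift2 f a1 a2) b1 b2 = shift2 f (a1 + b1) (a2 + b2).
Proof.
rewrite /shift2 map_comp_poly -map_poly_comp rmorphD /= map_polyX map_polyC /=.
rewrite comp_polyC -comp_polyA comp_polyD comp_polyX comp_polyC -addrA -!polyCD (addrC b2).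
congr comp_poly; apply: eq_map_poly => r /=.
by rewrite -comp_polyA comp_polyD comp_polyX comp_polyC -addrA -polyCD (addrC b1).
Qed.

Lemma shift2_00 f : shift2 f 0 0 = f.
Proof.
rewrite /shift2 !addr0 comp_polyXr.
by apply: map_poly_id => r _; rewrite comp_polyXr.
Qed.

Lemma coef2D f g i j : coef2 (f + g) i j = coef2 f i j + coef2 g i j.
Proof. by rewrite /coef2 !coefD. Qed.

Lemma coef2B f g i j : coef2 (f - g) i j = coef2 f i j - coef2 g i j.
Proof. by rewrite /coef2 !coefB. Qed.

Lemma coef2CM (c : C) f i j : coef2 (c%:P%:P * f) i j = c * coef2 f i j.
Proof. by rewrite /coef2 !coefCM. Qed.

Lemma coef2_sum I (r : seq I) (F : I -> P) i j :
  coef2 (\sum_(x <- r) F x) i j = \sum_(x <- r) coef2 (F x) i j.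
Proof. by rewrite /coef2 !coef_sum. Qed.

Lemma coef2M f g i j : coef2 (f * g) i j =
  \sum_(j1 < j.+1) \sum_(i1 < i.+1) coef2 f i1 j1 * coef2 g (i - i1) (j - j1).
Proof. by rewrite /coef2 coefM coef_sum; apply: eq_bigr => j1 _; rewrite coefM. Qed.

Definition monomial i j : P := 'X^i%:P * 'X^j.

Lemma coef2_monomial i0 j0 i j :
  coef2 (monomial i0 j0) i j = ((i == i0) && (j == j0))%:R.
Proof.
rewrite /coef2 /monomial coefMXn; case: ltnP => [hjj0|hj0j].
  by rewrite coef0 (ltn_eqF hjj0) andbF.
rewrite coefC; case: (j =P j0) => [->|hne]; first by rewrite subnn coefXn andbT.
by rewrite (_ : (j - j0 == 0)%N = false) ?coef0 ?andbF //; lia.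
Qed.

Lemma ev2_monomial i j z1 z2 : ev2 (monomial i j) z1 z2 = z1 ^+ i * z2 ^+ j.
Proof. by rewrite /ev2 /monomial !hornerE. Qed.

Definition vanishes_ge f d := forall i j, (i + j < d)%N -> coef2 f i j = 0.

Lemma vanishes_ge0 f : vanishes_ge f 0.
Proof. by []. Qed.

Lemma vanishes_geM f g m n :
  vanishes_ge f m -> vanishes_ge g n -> vanishes_ge (f * g) (m + n)%N.
Proof.
move=> hf hg i j hij; rewrite coef2M; apply: big1 => j1 _; apply: big1 => i1 _.
have := ltn_ord j1; have := ltn_ord i1 => hi1 hj1.
case: (ltnP (i1 + j1) m) => h; first by rewrite hf ?mul0r.
by rewrite hg ?mulr0 //; lia.
Qed.

Lemma vanishes_geX f n : vanishes_ge f 1 -> vanishes_ge (f ^+ n) n.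
Proof.
move=> hf; elim: n => [|n ih]; first exact: vanishes_ge0.
by rewrite exprS -add1n; apply: vanishes_geM.
Qed.

End BivariatePolynomials.

Definition exps d := {x : 'I_d * 'I_d | (x.1 + x.2 < d)%N}.
Definition exp1 d (x : exps d) : nat := (val x).1.
Definition exp2 d (x : exps d) : nat := (val x).2.

Lemma exps_lt d (x : exps d) : (exp1 x + exp2 x < d)%N.
Proof. exact: valP x. Qed.

Lemma exps_inj d (x y : exps d) : exp1 x = exp1 y -> exp2 x = exp2 y -> x = y.
Proof.
case: x y => [[a b] ?] [[c e] ?]; rewrite /exp1 /exp2 /= => /val_inj eac /val_inj ebe.
by apply: val_inj; rewrite /= eac ebe.
Qed.

Definition mk_exps d i j (h : (i + j < d)%N) : exps d :=
  exist _ (Ordinal (leq_ltn_trans (leq_addr j i) h),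
           Ordinal (leq_ltn_trans (leq_addl i j) h)) h.

Fact exps_split_subproof1 m n (x : exps m) : (exp1 x + exp2 x < m + n)%N.
Proof. exact: ltn_addr (exps_lt x). Qed.

Fact exps_split_subproof2 m n (x : exps n) : (m + exp1 x + exp2 x < m + n)%N.
Proof. by rewrite -addnA ltn_add2l exps_lt. Qed.

Fact exps_split_subproof3 m n (x : 'I_m * 'I_n) : (x.1 + (m - x.1 + x.2) < m + n)%N.
Proof. by case: x => [a b] /=; rewrite addnA subnKC ?ltn_add2l // ltnW. Qed.

(* Monomials of degree < m + n split into those of degree < m, those with
   z1-degree >= m, and an m * n block of the remaining ones. *)
Definition exps_split m n (x : (exps m + exps n) + ('I_m * 'I_n)) : exps (m + n)%N :=
  match x with
  | inl (inl y) => mk_exps (exps_split_subproof1 n y)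
  | inl (inr y) => mk_exps (exps_split_subproof2 m y)
  | inr y => mk_exps (exps_split_subproof3 y)
  end.

Lemma exps_split_inj m n : injective (@exps_split m n).
Proof.
move=> [[x|x]|[a b]] [[y|y]|[c e]] /(congr1 (fun z => (exp1 z, exp2 z))) [] /=;
  try have := exps_lt x; try have := exps_lt y;
  try have := ltn_ord a; try have := ltn_ord c; rewrite /exp1 /exp2 /= => *;
  try (exfalso; lia).

- by congr (inl (inl _)); apply: exps_inj; rewrite /exp1 /exp2 /=; lia.
- by congr (inl (inr _)); apply: exps_inj; rewrite /exp1 /exp2 /=; lia.
- by congr (inr (_, _)); apply: val_inj => /=; lia.
Qed.

Lemma card_exps_add m n : (#|{: exps m}| + #|{: exps n}| + m * n <= #|{: exps (m + n)}|)%N.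
Proof.
by have := leq_card _ (@exps_split_inj m n); rewrite !card_sum card_prod !card_ord.
Qed.

Section Jets.
Variable R : realType.
Local Notation C := R[i].
Local Notation P := {poly {poly C}}.
Implicit Types (f g : P).

Definition jet_poly d (F : exps d -> C) : P :=
  \sum_(x : exps d) (F x)%:P%:P * monomial R (exp1 x) (exp2 x).

Lemma coef2_jet_poly d F (x : exps d) : coef2 (jet_poly F) (exp1 x) (exp2 x) = F x.
Proof.
rewrite coef2_sum (bigD1 x) //= coef2CM coef2_monomial !eqxx mulr1 big1 ?addr0 //.
move=> y /negbTE neq_yx; rewrite coef2CM coef2_monomial.
case: (exp1 x =P exp1 y) => [e1|]; last by rewrite mulr0.
case: (exp2 x =P exp2 y) => [e2|]; last by rewrite andbF mulr0.
by rewrite (exps_inj e1 e2) eqxx in neq_yx.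
Qed.

Definition jet d f : P := jet_poly (fun x : exps d => coef2 f (exp1 x) (exp2 x)).

Lemma vanishes_ge_sub_jet d f : vanishes_ge (f - jet d f) d.
Proof.
move=> i j ijd; have := coef2_jet_poly (fun x => coef2 f (exp1 x) (exp2 x)) (mk_exps ijd).
by rewrite coef2B /= => ->; rewrite subrr.
Qed.

Definition jet_row d f : 'rV[C]_#|{: exps d}| :=
  \row_k coef2 f (exp1 (enum_val k)) (exp2 (enum_val k)).

Definition row_poly d (v : 'rV[C]_#|{: exps d}|) : P :=
  jet_poly (fun x => v 0 (enum_rank x)).

Lemma row_polyK d : cancel (@row_poly d) (@jet_row d).
Proof. by move=> v; apply/rowP => k; rewrite mxE coef2_jet_poly enum_valK. Qed.

Lemma jet_rowD d f g : jet_row d (f + g) = jet_row d f + jet_row d g.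
Proof. by apply/rowP => k; rewrite !mxE coef2D. Qed.

Lemma jet_rowCM d (c : C) f : jet_row d (c%:P%:P * f) = c *: jet_row d f.
Proof. by apply/rowP => k; rewrite !mxE coef2CM. Qed.

Lemma jet_row_sum d I (r : seq I) (F : I -> P) :
  jet_row d (\sum_(x <- r) F x) = \sum_(x <- r) jet_row d (F x).
Proof.
apply: (big_morph _ (jet_rowD d)).
by apply/rowP => k; rewrite !mxE /coef2 !coef0.
Qed.

Lemma jet_row_eq d f g : vanishes_ge (f - g) d -> jet_row d f = jet_row d g.
Proof.
move=> fg; apply/rowP => k; rewrite !mxE; apply/eqP; rewrite -subr_eq0 -coef2B.
by rewrite fg ?exps_lt.
Qed.

Lemma row_polyD d (v w : 'rV[C]_#|{: exps d}|) :
  row_poly (v + w) = row_poly v + row_poly w.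
Proof.
rewrite /row_poly /jet_poly -big_split; apply: eq_bigr => x _.
by rewrite mxE !polyCD mulrDl.
Qed.

Lemma row_polyZ d (c : C) (v : 'rV[C]_#|{: exps d}|) :
  row_poly (c *: v) = c%:P%:P * row_poly v.
Proof.
rewrite /row_poly /jet_poly mulr_sumr; apply: eq_bigr => x _.
by rewrite mxE !polyCM mulrA.
Qed.

Lemma row_poly_sum d I (r : seq I) (F : I -> 'rV[C]_#|{: exps d}|) :
  row_poly (\sum_(x <- r) F x) = \sum_(x <- r) row_poly (F x).
Proof.
apply: (big_morph _ (@row_polyD d)).
by rewrite /row_poly /jet_poly big1 // => x _; rewrite mxE !polyC0 mul0r.
Qed.

Definition jet_multiples d e f : 'M[C]_(#|{: exps e}|, #|{: exps d}|) :=
  \matrix_k jet_row d (monomial R (exp1 (enum_val k)) (exp2 (enum_val k)) * f).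

Lemma jet_row_mul_sub m n U f : vanishes_ge f m ->
  (jet_row (m + n)%N (U * f) <= jet_multiples (m + n)%N n f)%MS.
Proof.
move=> hf; have := vanishes_geM (vanishes_ge_sub_jet (d := n) U) hf.
rewrite mulrBl addnC => /jet_row_eq ->.
rewrite /jet /jet_poly mulr_suml jet_row_sum; apply: summx_sub => x _.
rewrite -mulrA jet_rowCM; apply: scalemx_sub.
have -> : jet_row (m + n)%N (monomial R (exp1 x) (exp2 x) * f) =
    row (enum_rank x) (jet_multiples (m + n)%N n f) by rewrite rowK enum_rankK.
exact: row_sub.
Qed.

Lemma jet_inverse d B : coef2 B 0 0 != 0 -> exists B' : P, vanishes_ge (1 - B * B') d.
Proof.
move=> hB; pose N := 1 - (coef2 B 0 0)^-1%:P%:P * B.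
have hN : vanishes_ge N 1.
  move=> i j h; have [-> ->] : i = 0%N /\ j = 0%N by lia.
  by rewrite coef2B coef2CM mulVf // /coef2 !coef1 /= subrr.
exists ((coef2 B 0 0)^-1%:P%:P * \sum_(j < d) N ^+ j).
have -> : 1 - B * ((coef2 B 0 0)^-1%:P%:P * \sum_(j < d) N ^+ j) = N ^+ d.
  by rewrite -[N ^+ d](subrK 1) subrX1 /N; ring.
exact: vanishes_geX.
Qed.

Lemma jet_row_ideal_sub m n f g U V B s :
  vanishes_ge f m -> vanishes_ge g n -> coef2 B 0 0 != 0 -> s * B = U * f + V * g ->
  (jet_row (m + n)%N s <= jet_multiples (m + n)%N n f + jet_multiples (m + n)%N m g)%MS.
Proof.
move=> hf hg hB sB; have [B' hB'] := jet_inverse (m + n)%N hB.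
have : vanishes_ge (s - (B' * U * f + B' * V * g)) (m + n)%N.
  have -> : s - (B' * U * f + B' * V * g) = s * (1 - B * B').
    by rewrite mulrBr mulr1 mulrA sB; ring.
  by rewrite -(add0n (m + n)%N); apply: vanishes_geM.
move/jet_row_eq ->; rewrite jet_rowD; apply: addmx_sub_adds; first exact: jet_row_mul_sub.
by rewrite addnC; apply: jet_row_mul_sub.
Qed.

Lemma rank_jet_multiples_compl m n f g :
  (m * n <= \rank (jet_multiples (m + n)%N n f + jet_multiples (m + n)%N m g)^C)%N.
Proof.
rewrite mxrank_compl; have := card_exps_add m n.
have [le_rk _] := mxrank_adds_leqif (jet_multiples (m + n)%N n f) (jet_multiples (m + n)%N m g).
have := rank_leq_row (jet_multiples (m + n)%N n f).
have := rank_leq_row (jet_multiples (m + n)%N m g).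
lia.
Qed.

(* [B] ranges over the units of the local ring at the origin. *)
Lemma local_quotient_dim_ge m n f g : vanishes_ge f m -> vanishes_ge g n ->
  exists r : 'I_(m * n) -> P, forall a : 'I_(m * n) -> C,
    (exists U V B : P, coef2 B 0 0 != 0 /\
       (\sum_i (a i)%:P%:P * r i) * B = U * f + V * g) ->
    forall i, a i = 0.
Proof.
move=> hf hg; pose G := (jet_multiples (m + n)%N n f + jet_multiples (m + n)%N m g)%MS.
have hmn : (m * n <= \rank G^C)%N := rank_jet_multiples_compl m n f g.
pose K := row_base G^C%MS.
exists (fun i => row_poly (row (widen_ord hmn i) K)) => a [U [V [B [hB sB]]]].
pose u : 'rV[C]_(\rank G^C) := \row_j \sum_(i < m * n | widen_ord hmn i == j) a i.
have Eu : \sum_i (a i)%:P%:P * row_poly (row (widen_ord hmn i) K) = row_poly (u *m K).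
  rewrite mulmx_sum_row row_poly_sum (partition_big (widen_ord hmn) xpredT) //=.
  apply: eq_bigr => j _; rewrite row_polyZ mxE !rmorph_sum /= mulr_suml.
  by apply: eq_bigr => i /eqP <-.
have uK0 : u *m K = 0.
  have uK_G : (jet_row (m + n)%N (row_poly (u *m K)) <= G)%MS.
    by rewrite Eu in sB; exact: jet_row_ideal_sub hf hg hB sB.
  apply/eqP; rewrite -submx0 -(capmx_compl G) sub_capmx -{1}(row_polyK (u *m K)) uK_G.
  by apply: submx_trans (submxMl _ _) _; rewrite eq_row_base.
have /eqP u0 : u == 0 by rewrite -(mulmx_free_eq0 _ (row_base_free G^C%MS)) uK0.
move=> i; have := congr1 (fun v : matrix _ _ _ => v 0 (widen_ord hmn i)) u0.
by rewrite /= !mxE (big_pred1 i) // => j /=.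
Qed.

End Jets.

Lemma mulr_denoms (K : fieldType) (s a1 b1 a2 b2 f g : K) : b1 != 0 -> b2 != 0 ->
  s = a1 / b1 * f + a2 / b2 * g -> s * (b1 * b2) = a1 * b2 * f + a2 * b1 * g.
Proof. by move=> b1_neq0 b2_neq0 ->; field; rewrite b1_neq0 b2_neq0. Qed.

Section Localization.
Variable R : realType.
Local Notation C := R[i].
Local Notation P := {poly {poly C}}.
Local Notation tofrac := (@FracField.tofrac P).
Implicit Types (f g : P).

Lemma in_Olocal_tofrac l1 l2 f : in_Olocal l1 l2 (tofrac f).
Proof. by exists f, 1; rewrite ev21 oner_eq0 tofrac1 divr1. Qed.

Lemma in_ideal_loc_tofrac f g l1 l2 (s : P) : in_ideal_loc f g l1 l2 (tofrac s) ->
  exists U V B : P, ev2 B l1 l2 != 0 /\ s * B = U * f + V * g.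
Proof.
move=> [_ [_ [[a1 [b1 [hb1 ->]]] [[a2 [b2 [hb2 ->]]] E]]]].
exists (a1 * b2), (a2 * b1), (b1 * b2); split; first by rewrite ev2M mulf_neq0.
have tofrac_neq0 b : ev2 b l1 l2 != 0 -> tofrac b != 0.
  by rewrite tofrac_eq0; apply: contraNneq => ->; rewrite /ev2 !horner0.
apply/eqP; rewrite -tofrac_eq; apply/eqP; rewrite !rmorphM !rmorphD !rmorphM /=.
exact: mulr_denoms (tofrac_neq0 _ hb1) (tofrac_neq0 _ hb2) E.
Qed.

Lemma intersection_multiplicity_ge_shift2 f g L l1 l2 m n :
  vanishes_ge (shift2 f l1 l2) m -> vanishes_ge (shift2 g l1 l2 - L * shift2 f l1 l2) n ->
  intersection_multiplicity_ge f g l1 l2 (m * n).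
Proof.
move=> hf hg; have [r hr] := local_quotient_dim_ge hf hg.
exists (fun i => tofrac (shift2 (r i) (- l1) (- l2))).
split=> [i|a]; first exact: in_Olocal_tofrac.
set s := \sum_i (a i)%:P%:P * shift2 (r i) (- l1) (- l2).
have -> : \sum_i tofrac (a i)%:P%:P * tofrac (shift2 (r i) (- l1) (- l2)) = tofrac s.
  by rewrite rmorph_sum; apply: eq_bigr => i _; rewrite rmorphM.
move=> /in_ideal_loc_tofrac [U [V [B [hB /(congr1 (fun q => shift2 q l1 l2)) /=]]]].
rewrite shift2M shift2D !shift2M shift2_sum.
under eq_bigr => i _ do rewrite shift2M shift2C shift2_shift2 !addNr shift2_00.
move=> sB; apply: hr; exists (shift2 U l1 l2 + shift2 V l1 l2 * L), (shift2 V l1 l2).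
exists (shift2 B l1 l2); rewrite -ev200 ev2_shift2 !add0r sB; split=> //.
by rewrite mulrDl mulrBr mulrA addrACA subrr addr0.
Qed.

End Localization.

Lemma le_of_pow_le (F : realFieldType) (s h a b : F) (d n : nat) :
  0 < s -> s <= 1 -> 0 <= a -> (d <= n)%N ->
  s ^+ d * h <= a * s ^+ n + b * s ^+ d.+1 -> h <= a + b * s.
Proof.
move=> s_gt0 s_le1 a0 dn H; rewrite -(ler_pM2l (exprn_gt0 d s_gt0)); apply: le_trans H _.
rewrite -(subnKC dn) exprD exprSr mulrDr [b * _]mulrCA lerD2r mulrCA.
apply: ler_wpM2l; first by rewrite exprn_ge0 // ltW.
by apply: ler_piMr => //; rewrite exprn_ile1 // ltW.
Qed.

Lemma eq0_of_small_bound (F : realFieldType) (h A B : F) : 0 <= h -> 0 <= A -> 0 <= B ->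
  (forall eps, 0 < eps -> exists2 s0, 0 < s0 &
     forall s, 0 < s -> s < s0 -> h <= eps * A + B * s) -> h = 0.
Proof.
move=> h0 A0 B0 hsmall; apply/eqP; rewrite eq_le h0 andbT leNgt; apply/negP => hpos.
pose eps := h / (2 * (A + 1)); pose t := h / (4 * (B + 1)).
have eps_gt0 : 0 < eps by rewrite divr_gt0 //; lra.
have t_gt0 : 0 < t by rewrite divr_gt0 //; lra.
have epsA : eps * A <= eps * (A + 1) by rewrite ler_wpM2l ?lerDl ?ltW.
have epsA1 : eps * (A + 1) = h / 2 by rewrite /eps; field; lra.
have Bt : B * t <= (B + 1) * t by rewrite ler_wpM2r ?lerDl ?ltW.
have Bt1 : (B + 1) * t = h / 4 by rewrite /t; field; lra.
have [s0 s0_gt0 hs] := hsmall eps eps_gt0.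
pose s := Num.min (s0 / 2) t.
have s_gt0 : 0 < s by rewrite lt_min t_gt0 divr_gt0.
have s_lt : s < s0 by rewrite gt_min; apply/orP; left; lra.
have Bs : B * s <= B * t by rewrite ler_wpM2l // ge_min lexx orbT.
have := hs s s_gt0 s_lt; lra.
Qed.

Section Radial.
Variable R : realType.
Local Notation C := R[i].
Local Open Scope complex_scope.

Lemma ge0_complexP (x : C) : 0 <= x -> exists2 r : R, 0 <= r & x = r%:C.
Proof.
move=> x0; have /complex_realP [r xr] := ger0_real x0.
by exists r; rewrite // -ler0c -xr.
Qed.

Lemma norm_scale_unit (r : R) (l : C) : 0 <= r -> `|l| = 1 -> `|r%:C * l| = r%:C.
Proof. by move=> r0 l1; rewrite normrM l1 mulr1 ger0_norm // ler0c. Qed.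

Lemma radial_norms (l : C) (r : R) : `|l| = 1 -> 0 <= r <= 1 ->
  `|r%:C * - l + l - l| = r%:C /\ `|r%:C * - l + l| = 1 - r%:C.
Proof.
move=> l_unit /andP [r0 r1]; split; first by rewrite addrK mulrN normrN norm_scale_unit.
have -> : r%:C * - l + l = (1 - r)%:C * l by rewrite rmorphB rmorph1 /=; ring.
by rewrite norm_scale_unit ?rmorphB ?subr_ge0.
Qed.

Lemma Gamma_radial (l1 l2 : C) (s t : R) : `|l1| = 1 -> `|l2| = 1 ->
  0 < s -> 1 <= t -> s * (1 + t) < 1 ->
  Gamma (t + 1) l1 l2 (s%:C * - l1 + l1) (s%:C * (t%:C * - l2) + l2).
Proof.
move=> l1_unit l2_unit s_gt0 t1 st1; rewrite mulrA -rmorphM.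
have [n1l n1] := radial_norms l1_unit (ltac:(apply/andP; split; nra) : 0 <= s <= 1).
have [n2l n2] := radial_norms l2_unit (ltac:(apply/andP; split; nra) : 0 <= s * t <= 1).
have lt1 (r : R) : 0 < r -> 1 - r%:C < 1 :> C.
  by move=> r0; rewrite gtrBl ltcR.
split; first by rewrite n1 lt1.
split; first by rewrite n2 lt1 //; nra.
have ratio (x y : R) : x \in [:: s; s * t] -> y \in [:: s; s * t] -> x <= (t + 1) * y.
  by rewrite !inE => /orP [] /eqP -> /orP [] /eqP ->; nra.
rewrite /= n1l n2l n1 n2 !subKr => x y.
rewrite !inE => /or4P [] /eqP -> /or4P [] /eqP ->; rewrite -!rmorphM !lecR;
  by split; apply: ratio; rewrite !inE eqxx ?orbT.
Qed.

Lemma dist2_radial (l1 l2 : C) (s t : R) : `|l1| = 1 -> `|l2| = 1 ->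
  0 < s -> 1 <= t -> s * (1 + t) < 1 ->
  dist2 (s%:C * - l1 + l1) (s%:C * (t%:C * - l2) + l2) l1 l2 <= (s * (1 + t))%:C.
Proof.
move=> l1_unit l2_unit s_gt0 t1 st1; rewrite mulrA -rmorphM.
have [n1l _] := radial_norms l1_unit (ltac:(apply/andP; split; nra) : 0 <= s <= 1).
have [n2l _] := radial_norms l2_unit (ltac:(apply/andP; split; nra) : 0 <= s * t <= 1).
rewrite /dist2 n1l n2l -!rmorphXn -rmorphD.
rewrite -(@sqrCK _ (s * (1 + t))%:C) ?ler0c; last by nra.
rewrite ler_sqrtC ?qualifE /= ?ler0c -?rmorphXn ?lecR //; nra.
Qed.

End Radial.

Section Estimates.
Variable R : realType.
Local Notation C := R[i].
Local Notation P := {poly {poly C}}.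
Implicit Types (F : P).

Definition majorant F (c1 c2 : C) : C :=
  \sum_(j < size F) \sum_(i < size F`_j) `|coef2 F i j| * `|c1| ^+ i * `|c2| ^+ j.

Lemma majorant_ge0 F c1 c2 : 0 <= majorant F c1 c2.
Proof. by apply: sumr_ge0 => j _; apply: sumr_ge0 => i _; rewrite !mulr_ge0 ?exprn_ge0. Qed.

Lemma ev2_scale_le F d c1 c2 (s : C) : vanishes_ge F d -> 0 <= s -> s <= 1 ->
  `|ev2 F (s * c1) (s * c2)| <= majorant F c1 c2 * s ^+ d.
Proof.
move=> hF s_ge0 s_le1; rewrite ev2E /majorant mulr_suml.
apply: le_trans (ler_norm_sum _ _ _) _; apply: ler_sum => j _.
rewrite mulr_suml; apply: le_trans (ler_norm_sum _ _ _) _; apply: ler_sum => i _.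
have [ltd|led] := ltnP (i + j) d.
  by rewrite hF // !mul0r normr0 !mulr_ge0 ?exprn_ge0.
rewrite !normrM !normrX !normrM (ger0_norm s_ge0) !exprMn.
have -> : `|coef2 F i j| * (s ^+ i * `|c1| ^+ i) * (s ^+ j * `|c2| ^+ j) =
    `|coef2 F i j| * `|c1| ^+ i * `|c2| ^+ j * s ^+ (i + j) by rewrite exprD; ring.
by apply: ler_wpM2l; rewrite ?mulr_ge0 ?exprn_ge0 // ler_wiXn2l.
Qed.

Definition homog_part F d : P :=
  \sum_(j < d.+1) (coef2 F (d - j) j)%:P%:P * monomial R (d - j) j.

Lemma coef2_homog_part F d i j :
  coef2 (homog_part F d) i j = if (i + j == d)%N then coef2 F i j else 0.
Proof.
rewrite /homog_part coef2_sum.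
under eq_bigr => j' _ do rewrite coef2CM coef2_monomial.
case: eqP => [ijd|ijd]; last first.
  apply: big1 => j' _; case: (i =P (d - j')%N) => [eij|]; case: (j =P j') => [ejj|];
    rewrite ?andbF ?mulr0 //; exfalso; have := ltn_ord j'; lia.
have jd : (j < d.+1)%N by lia.
rewrite (bigD1 (Ordinal jd)) //= (_ : d - j = i)%N ?eqxx ?mulr1; last by lia.
rewrite big1 ?addr0 // => j' /negbTE neq_j'.
case: (j =P j') => [ej|]; last by rewrite andbF mulr0.
by move: neq_j'; rewrite (_ : j' = Ordinal jd) ?eqxx //; apply: val_inj.
Qed.

Lemma vanishes_ge_sub_homog_part F d :
  vanishes_ge F d -> vanishes_ge (F - homog_part F d) d.+1.
Proof.
move=> hF i j ijd; rewrite coef2B coef2_homog_part.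
by case: eqP => [_|neq]; rewrite ?subrr // hF ?subr0 //; lia.
Qed.

Lemma ev2_homog_part F d x y :
  ev2 (homog_part F d) x y = \sum_(j < d.+1) coef2 F (d - j) j * x ^+ (d - j) * y ^+ j.
Proof. by rewrite ev2_sum; apply: eq_bigr => j _; rewrite ev2CM ev2_monomial mulrA. Qed.

Lemma ev2_homog_part_scale F d (s x y : C) :
  ev2 (homog_part F d) (s * x) (s * y) = s ^+ d * ev2 (homog_part F d) x y.
Proof.
rewrite !ev2_homog_part mulr_sumr; apply: eq_bigr => j _.
by rewrite !exprMn -[in s ^+ d](subnK (leq_ord j)) exprD; ring.
Qed.

(* t |-> (homogeneous part at (x, t y)) is a polynomial of degree <= d, so
   it vanishes identically once it has d + 1 roots. *)
Lemma homog_part_coef_eq0 F d (x y : C) : x != 0 -> y != 0 ->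
  (forall b : nat, (0 < b <= d.+1)%N -> ev2 (homog_part F d) x (b%:R * y) = 0) ->
  forall i j, (i + j = d)%N -> coef2 F i j = 0.
Proof.
move=> x0 y0 hroots i j ijd.
pose h : {poly C} := \poly_(j < d.+1) (coef2 F (d - j) j * x ^+ (d - j) * y ^+ j).
have h0 : h = 0.
  apply: (@roots_geq_poly_eq0 _ _ (mkseq (fun b => b.+1%:R) d.+1)).
  - apply/allP => r /mapP [b]; rewrite mem_iota => /andP [_ bd] ->.
    rewrite add0n in bd; rewrite /root -(hroots b.+1 bd).
    rewrite horner_poly ev2_homog_part; apply/eqP; apply: eq_bigr => j' _.
    by rewrite exprMn; ring.
  - by rewrite map_inj_uniq ?iota_uniq // => b b' /eqP; rewrite eqr_nat => /eqP [].
  - by rewrite size_mkseq size_poly.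
have := congr1 (fun q : {poly C} => q`_j) h0; rewrite coef_poly coef0 ifT; last by lia.
rewrite (_ : d - j = i)%N; last by lia.
by move/eqP; rewrite !mulf_eq0 !expf_eq0 (negbTE x0) (negbTE y0) !andbF !orbF => /eqP.
Qed.

End Estimates.

Section NonTangentialVanishing.
Variable R : realType.
Local Notation C := R[i].
Local Notation P := {poly {poly C}}.
Local Open Scope complex_scope.

Definition nt_approx (f : C -> C -> C) (L : P) (l1 l2 : C) (k : nat) : Prop :=
  forall c : R, 1 < c -> forall eps : R, 0 < eps -> exists2 delta : R, 0 < delta &
    forall z1 z2 : C, Gamma c l1 l2 z1 z2 -> dist2 z1 z2 l1 l2 < delta%:C ->
      `|f z1 z2 - ev2 L (z1 - l1) (z2 - l2)| <= eps%:C * dist2 z1 z2 l1 l2 ^+ k.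

Definition zero_free_bidisk (p : P) : Prop :=
  forall z1 z2 : C, `|z1| < 1 -> `|z2| < 1 -> ev2 p z1 z2 != 0.

Lemma radial_estimate (p pt L : P) l1 l2 k M (t : R) :
  `|l1| = 1 -> `|l2| = 1 -> 1 <= t -> zero_free_bidisk p ->
  nt_approx (fun z1 z2 => ev2 pt z1 z2 / ev2 p z1 z2) L l1 l2 k ->
  vanishes_ge (shift2 p l1 l2) M ->
  forall eps : R, 0 < eps -> exists2 s0 : R, 0 < s0 & forall s : R, 0 < s -> s < s0 ->
    `|ev2 (shift2 pt l1 l2 - L * shift2 p l1 l2) (s%:C * - l1) (s%:C * (t%:C * - l2))|
      <= majorant (shift2 p l1 l2) (- l1) (t%:C * - l2) * s%:C ^+ M
         * (eps%:C * (s * (1 + t))%:C ^+ k).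
Proof.
move=> l1u l2u t1 p_zf hnt hM eps eps0.
have [del del0 hdel] := hnt (t + 1) (ltac:(lra)) eps eps0.
exists (Num.min 1 del / (1 + t)) => [|s s_gt0]; first by rewrite divr_gt0 ?lt_min ?del0 //; lra.
rewrite ltr_pdivlMr ?lt_min => [/andP [st1 st_del]|]; last by lra.
set w1 := s%:C * - l1; set w2 := s%:C * (t%:C * - l2).
have hG := Gamma_radial l1u l2u s_gt0 t1 st1.
have hdist := dist2_radial l1u l2u s_gt0 t1 st1.
have pz0 : ev2 p (w1 + l1) (w2 + l2) != 0 by case: hG => z1_lt1 [z2_lt1 _]; exact: p_zf.
have st_delC : (s * (1 + t))%:C < del%:C by rewrite ltcR; lra.
have := hdel _ _ hG (le_lt_trans hdist st_delC); rewrite !addrK => hf.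
have -> : ev2 (shift2 pt l1 l2 - L * shift2 p l1 l2) w1 w2 =
    ev2 p (w1 + l1) (w2 + l2) * (ev2 pt (w1 + l1) (w2 + l2) / ev2 p (w1 + l1) (w2 + l2)
                                 - ev2 L w1 w2).
  by rewrite ev2B ev2M !ev2_shift2 mulrBr mulrCA divff // mulr1 mulrC.
have s0C : 0 <= s%:C by rewrite ler0c ltW.
have s1C : s%:C <= 1 by rewrite (_ : 1 = 1%:C) // lecR; nra.
rewrite normrM; apply: ler_pM => //; first by rewrite -ev2_shift2 ev2_scale_le.
apply: le_trans hf _; apply: ler_wpM2l; first by rewrite ler0c ltW.
apply: lerXn2r => //; rewrite qualifE /= ?ler0c //; last by nra.
by rewrite sqrtC_ge0 addr_ge0 // exprn_ge0.
Qed.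

Lemma homog_part_radial_eq0 (p pt L : P) l1 l2 k M d (t : R) :
  `|l1| = 1 -> `|l2| = 1 -> 1 <= t -> zero_free_bidisk p ->
  nt_approx (fun z1 z2 => ev2 pt z1 z2 / ev2 p z1 z2) L l1 l2 k ->
  vanishes_ge (shift2 p l1 l2) M ->
  vanishes_ge (shift2 pt l1 l2 - L * shift2 p l1 l2) d -> (d <= M + k)%N ->
  ev2 (homog_part (shift2 pt l1 l2 - L * shift2 p l1 l2) d) (- l1) (t%:C * - l2) = 0.
Proof.
move=> l1u l2u t1 p_zf hnt hM hQ dMk.
set Q := shift2 pt l1 l2 - L * shift2 p l1 l2; set c2 := t%:C * - l2.
have [h h0 hE] := ge0_complexP (normr_ge0 (ev2 (homog_part Q d) (- l1) c2)).
have [k0 k00 k0E] := ge0_complexP (majorant_ge0 (shift2 p l1 l2) (- l1) c2).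
have [k1 k10 k1E] := ge0_complexP (majorant_ge0 (Q - homog_part Q d) (- l1) c2).
suff h_eq0 : h = 0 by apply/eqP; rewrite -normr_eq0 hE h_eq0.
apply: (@eq0_of_small_bound _ h (k0 * (1 + t) ^+ k) k1) => //.
  by rewrite mulr_ge0 // exprn_ge0 //; lra.
move=> eps eps0; have [s0 s0_gt0 hs] := radial_estimate l1u l2u t1 p_zf hnt hM eps0.
exists (Num.min 1 s0) => [|s s_gt0]; first by rewrite lt_min ltr01.
rewrite lt_min => /andP [s_lt1 s_lt_s0]; apply: (le_of_pow_le s_gt0 (ltW s_lt1) _ dMk).
  by rewrite !mulr_ge0 ?exprn_ge0 ?(ltW eps0) //; lra.
have s0C : 0 <= s%:C by rewrite ler0c ltW.
have s1C : s%:C <= 1 by rewrite (_ : 1 = 1%:C) // lecR ltW.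
have hrem := ev2_scale_le (- l1) c2 (vanishes_ge_sub_homog_part hQ) s0C s1C.
have hQs := hs s s_gt0 s_lt_s0; rewrite -/Q -/c2 k0E in hQs.
have eH : s%:C ^+ d * ev2 (homog_part Q d) (- l1) c2 =
    ev2 Q (s%:C * - l1) (s%:C * c2) - ev2 (Q - homog_part Q d) (s%:C * - l1) (s%:C * c2).
  by rewrite ev2B ev2_homog_part_scale opprB addrC subrK.
have := le_trans (ler_normB _ _) (lerD hQs hrem).
rewrite -eH normrM normrX ger0_norm // hE k1E -!rmorphXn -!rmorphM -rmorphD lecR.
suff -> : k0 * s ^+ M * (eps * (s * (1 + t)) ^+ k) = eps * (k0 * (1 + t) ^+ k) * s ^+ (M + k).
  by [].
by rewrite exprD exprMn; ring.
Qed.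

Lemma vanishes_ge_approx (p pt L : P) l1 l2 k M :
  `|l1| = 1 -> `|l2| = 1 -> zero_free_bidisk p ->
  nt_approx (fun z1 z2 => ev2 pt z1 z2 / ev2 p z1 z2) L l1 l2 k ->
  vanishes_ge (shift2 p l1 l2) M ->
  vanishes_ge (shift2 pt l1 l2 - L * shift2 p l1 l2) (M + k).+1.
Proof.
move=> l1u l2u p_zf hnt hM.
have Nl_neq0 (l : C) : `|l| = 1 -> - l != 0 by move=> lu; rewrite oppr_eq0 -normr_eq0 lu oner_eq0.
suff hd d : (d <= (M + k).+1)%N -> vanishes_ge (shift2 pt l1 l2 - L * shift2 p l1 l2) d.
  exact: hd.
elim: d => [|d ih] dMk; first exact: vanishes_ge0.
have hQd := ih (ltnW dMk).
move=> i j; rewrite ltnS leq_eqVlt => /orP [/eqP ijd|]; last exact: hQd.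
apply: (homog_part_coef_eq0 (Nl_neq0 _ l1u) (Nl_neq0 _ l2u) _ ijd) => b /andP [b_gt0 _].
rewrite -[b%:R](rmorph_nat (real_complex R)).
have t1 : 1 <= b%:R :> R by rewrite ler1n.
exact: homog_part_radial_eq0 l1u l2u t1 p_zf hnt hM hQd dMk.
Qed.

End NonTangentialVanishing.

Theorem corollary14p9 (R : realType) (p : {poly {poly R[i]}}) (l1 l2 : R[i])
    (k M : nat) :
  `|l1| = 1 -> `|l2| = 1 ->
  semi_stable p ->
  nt_Ck (fun z1 z2 => ev2 (ptilde p) z1 z2 / ev2 p z1 z2) l1 l2 k ->
  vanishes_to_order p l1 l2 M ->
  intersection_multiplicity_ge p (ptilde p) l1 l2 (M * (M + k + 1)).
Proof.
move=> l1u l2u [p_zf _] [L [_ hnt]] [_ hM].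
have := vanishes_ge_approx l1u l2u p_zf hnt hM; rewrite -addn1 => hQ.
exact: intersection_multiplicity_ge_shift2 hM hQ.
Qed.
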